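(* Let $\mathcal{V}$ be a braided monoidal category (tensor $\otimes$, unit $I$, braiding $c$) having reflexive coequalizers which are preserved by each functor $X\otimes -$. Let $(A,\delta,\varepsilon,q)$ be a herd in $\mathcal{V}$, let $\sigma=(q\otimes 1)(1\otimes 1\otimes \delta)$ and $\tau=1\otimes 1\otimes \varepsilon$ as morphisms $A\otimes A\otimes A\to A\otimes A$, and let $\varpi:A\otimes A\to H$ be the coequalizer of $\sigma$ and $\tau$, equipped with the unique comonoid structure making $\varpi:A\otimes A^{\circ}\to H$ a comonoid morphism. Let $\mu:H\otimes H\to H$ be the unique morphism with $\mu(\varpi\otimes\varpi)=\varpi(q\otimes 1)$ as morphisms $A^{\otimes 4}\to H$. Then $\mu$ is associative, and $\mu$ is a comonoid morphism $H\otimes H\to H$ (where $H\otimes H$ carries the tensor product comonoid structure).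
   Context: For a comonoid $A=(A,\delta,\varepsilon)$ in $\mathcal{V}$, the opposite comonoid $A^{\circ}$ is $(A, c_{A,A}\delta,\varepsilon)$. For comonoids $A,B$, the tensor comonoid $A\otimes B$ has comultiplication $(1\otimes c_{A,B}\otimes 1)(\delta\otimes\delta)$ and counit $\varepsilon\otimes\varepsilon$. A herd in $\mathcal{V}$ is a comonoid $A$ together with a comonoid morphism $q:A\otimes A^{\circ}\otimes A\to A$ such that $q(q\otimes 1\otimes 1)=q(1\otimes 1\otimes q):A^{\otimes 5}\to A$, $q(1\otimes\delta)=1\otimes\varepsilon:A\otimes A\to A$, and $q(\delta\otimes 1)=\varepsilon\otimes 1:A\otimes A\to A$. (The pair $\sigma,\tau$ is reflexive with common right inverse $1\otimes\delta$, and the coequalizer $\varpi\otimes\varpi$ of $\sigma\otimes\sigma,\tau\otimes\tau$ is used to define $\mu$.) *)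

Record BMCData : Type := {
  ob :> Type;
  hom : ob -> ob -> Type;
  comp : forall a b c : ob, hom b c -> hom a b -> hom a c;
  idm : forall a : ob, hom a a;
  tens : ob -> ob -> ob;
  tensm : forall a b c d : ob, hom a b -> hom c d -> hom (tens a c) (tens b d);
  unitob : ob;
  assoc : forall a b c : ob, hom (tens (tens a b) c) (tens a (tens b c));
  assoc_inv : forall a b c : ob, hom (tens a (tens b c)) (tens (tens a b) c);
  lunit : forall a : ob, hom (tens unitob a) a;
  lunit_inv : forall a : ob, hom a (tens unitob a);
  runit : forall a : ob, hom (tens a unitob) a;
  runit_inv : forall a : ob, hom a (tens a unitob);
  braid : forall a b : ob, hom (tens a b) (tens b a);
  braid_inv : forall a b : ob, hom (tens b a) (tens a b)
}.

Arguments hom {_} _ _.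
Arguments comp {_ a b c} _ _.
Arguments idm {_} a.
Arguments tens {_} _ _.
Arguments tensm {_ a b c d} _ _.
Arguments unitob {_}.
Arguments assoc {_} a b c.
Arguments assoc_inv {_} a b c.
Arguments lunit {_} a.
Arguments lunit_inv {_} a.
Arguments runit {_} a.
Arguments runit_inv {_} a.
Arguments braid {_} a b.
Arguments braid_inv {_} a b.

Declare Scope cat_scope.
Notation "g ∘ f" := (comp g f) (at level 40, left associativity) : cat_scope.
Notation "f ⊗ g" := (tensm f g) (at level 34, left associativity) : cat_scope.
Open Scope cat_scope.

Record IsBMC (C : BMCData) : Prop := {
  comp_idl : forall (a b : C) (f : hom a b), idm b ∘ f = f;
  comp_idr : forall (a b : C) (f : hom a b), f ∘ idm a = f;
  comp_assoc : forall (a b c d : C) (f : hom a b) (g : hom b c) (h : hom c d),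
      h ∘ (g ∘ f) = (h ∘ g) ∘ f;
  tens_id : forall a b : C, idm a ⊗ idm b = idm (tens a b);
  tens_comp : forall (a b c a' b' c' : C) (f : hom a b) (f' : hom b c)
      (g : hom a' b') (g' : hom b' c'),
      (f' ∘ f) ⊗ (g' ∘ g) = (f' ⊗ g') ∘ (f ⊗ g);
  assoc_iso1 : forall a b c : C, assoc_inv a b c ∘ assoc a b c = idm _;
  assoc_iso2 : forall a b c : C, assoc a b c ∘ assoc_inv a b c = idm _;
  assoc_nat : forall (a a' b b' c c' : C) (f : hom a a') (g : hom b b') (h : hom c c'),
      assoc a' b' c' ∘ ((f ⊗ g) ⊗ h) = (f ⊗ (g ⊗ h)) ∘ assoc a b c;
  lunit_iso1 : forall a : C, lunit_inv a ∘ lunit a = idm _;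
  lunit_iso2 : forall a : C, lunit a ∘ lunit_inv a = idm _;
  lunit_nat : forall (a b : C) (f : hom a b), lunit b ∘ (idm unitob ⊗ f) = f ∘ lunit a;
  runit_iso1 : forall a : C, runit_inv a ∘ runit a = idm _;
  runit_iso2 : forall a : C, runit a ∘ runit_inv a = idm _;
  runit_nat : forall (a b : C) (f : hom a b), runit b ∘ (f ⊗ idm unitob) = f ∘ runit a;
  pentagon : forall a b c d : C,
      (idm a ⊗ assoc b c d) ∘ assoc a (tens b c) d ∘ (assoc a b c ⊗ idm d)
      = assoc a b (tens c d) ∘ assoc (tens a b) c d;
  triangle : forall a b : C,
      (idm a ⊗ lunit b) ∘ assoc a unitob b = runit a ⊗ idm b;
  braid_iso1 : forall a b : C, braid_inv a b ∘ braid a b = idm _;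
  braid_iso2 : forall a b : C, braid a b ∘ braid_inv a b = idm _;
  braid_nat : forall (a a' b b' : C) (f : hom a a') (g : hom b b'),
      braid a' b' ∘ (f ⊗ g) = (g ⊗ f) ∘ braid a b;
  hexagon1 : forall a b c : C,
      assoc b c a ∘ braid a (tens b c) ∘ assoc a b c
      = (idm b ⊗ braid a c) ∘ assoc b a c ∘ (braid a b ⊗ idm c);
  hexagon2 : forall a b c : C,
      assoc_inv c a b ∘ braid (tens a b) c ∘ assoc_inv a b c
      = (braid a c ⊗ idm b) ∘ assoc_inv a c b ∘ (idm a ⊗ braid b c)
}.

Section Defs.
Context {C : BMCData}.

Definition IsCoequalizer {X Y Q : C} (f g : hom X Y) (e : hom Y Q) : Prop :=
  e ∘ f = e ∘ g /\
  forall (Z : C) (h : hom Y Z), h ∘ f = h ∘ g ->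
    exists k : hom Q Z, k ∘ e = h /\ forall k' : hom Q Z, k' ∘ e = h -> k' = k.

Definition IsReflexivePair {X Y : C} (f g : hom X Y) : Prop :=
  exists s : hom Y X, f ∘ s = idm Y /\ g ∘ s = idm Y.

Definition HasReflexiveCoequalizers : Prop :=
  forall (X Y : C) (f g : hom X Y), IsReflexivePair f g ->
    exists (Q : C) (e : hom Y Q), IsCoequalizer f g e.

Definition TensorLeftPreservesReflexiveCoequalizers : Prop :=
  forall (X Y Q : C) (f g : hom X Y) (e : hom Y Q),
    IsReflexivePair f g -> IsCoequalizer f g e ->
    forall W : C, IsCoequalizer (idm W ⊗ f) (idm W ⊗ g) (idm W ⊗ e).

Definition IsComonoid (A : C) (d : hom A (tens A A)) (e : hom A unitob) : Prop :=
  assoc A A A ∘ (d ⊗ idm A) ∘ d = (idm A ⊗ d) ∘ d /\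
  lunit A ∘ (e ⊗ idm A) ∘ d = idm A /\
  runit A ∘ (idm A ⊗ e) ∘ d = idm A.

Definition IsComonoidMorphism {A B : C}
    (dA : hom A (tens A A)) (eA : hom A unitob)
    (dB : hom B (tens B B)) (eB : hom B unitob) (f : hom A B) : Prop :=
  dB ∘ f = (f ⊗ f) ∘ dA /\ eB ∘ f = eA.

(* opposite comonoid: comultiplication c_{A,A} δ, same counit *)
Definition opDelta {A : C} (d : hom A (tens A A)) : hom A (tens A A) :=
  braid A A ∘ d.

(* the middle-four interchange (A⊗A')⊗(B⊗B') -> (A⊗B)⊗(A'⊗B'),
   i.e. 1 ⊗ c_{A',B} ⊗ 1 with the needed associativity constraints *)
Definition middleFour (A A' B B' : C) :
    hom (tens (tens A A') (tens B B')) (tens (tens A B) (tens A' B')) :=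
  assoc_inv A B (tens A' B')
  ∘ (idm A ⊗ assoc B A' B')
  ∘ (idm A ⊗ (braid A' B ⊗ idm B'))
  ∘ (idm A ⊗ assoc_inv A' B B')
  ∘ assoc A A' (tens B B').

Definition tensDelta {A B : C} (dA : hom A (tens A A)) (dB : hom B (tens B B)) :
    hom (tens A B) (tens (tens A B) (tens A B)) :=
  middleFour A A B B ∘ (dA ⊗ dB).

Definition tensEps {A B : C} (eA : hom A unitob) (eB : hom B unitob) :
    hom (tens A B) unitob :=
  lunit unitob ∘ (eA ⊗ eB).

(* herds; A ⊗ A° ⊗ A is bracketed as (A ⊗ A°) ⊗ A *)
Definition IsHerd (A : C) (d : hom A (tens A A)) (e : hom A unitob)
    (q : hom (tens (tens A A) A) A) : Prop :=
  IsComonoid A d e /\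
  IsComonoidMorphism (tensDelta (tensDelta d (opDelta d)) d)
                     (tensEps (tensEps e e) e) d e q /\
  q ∘ ((q ⊗ idm A) ⊗ idm A)
    = q ∘ (idm (tens A A) ⊗ q) ∘ (idm (tens A A) ⊗ assoc_inv A A A)
        ∘ assoc (tens A A) A (tens A A) ∘ assoc (tens (tens A A) A) A A /\
  q ∘ assoc_inv A A A ∘ (idm A ⊗ d) = runit A ∘ (idm A ⊗ e) /\
  q ∘ (d ⊗ idm A) = lunit A ∘ (e ⊗ idm A).

Definition herdSigma {A : C} (d : hom A (tens A A)) (q : hom (tens (tens A A) A) A) :
    hom (tens (tens A A) A) (tens A A) :=
  (q ⊗ idm A) ∘ assoc_inv (tens A A) A A ∘ (idm (tens A A) ⊗ d).

Definition herdTau {A : C} (e : hom A unitob) :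
    hom (tens (tens A A) A) (tens A A) :=
  runit (tens A A) ∘ (idm (tens A A) ⊗ e).

End Defs.

(* The pair σ, τ is reflexive (with common section α⁻¹(1 ⊗ δ)), so its coequalizer ϖ stays
   epi after tensoring with any object on the left, and via the braiding also on the right.
   Hence ϖ ⊗ ϖ and (ϖ ⊗ ϖ) ⊗ ϖ are epi, and both claims may be checked after precomposing
   with them.  There μ becomes ϖ ∘ m for the multiplication m(a, b, c, d) = (q(a, b, c), d)
   of A ⊗ A°: associativity of μ reduces to the herd identity q(q ⊗ 1 ⊗ 1) = q(1 ⊗ 1 ⊗ q),
   and comultiplicativity of μ to that of ϖ(q ⊗ 1), a composite of comonoid morphisms. *)

From Stdlib Require Import Setoid.

Section BraidedMonoidal.
Context {C : BMCData} (HC : IsBMC C).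

(** * Calculus in a braided monoidal category *)

Lemma compA {a b c d : C} (f : hom a b) (g : hom b c) (h : hom c d) : h ∘ (g ∘ f) = (h ∘ g) ∘ f.
Proof. apply (comp_assoc C HC). Qed.
Lemma idm_comp {a b : C} (f : hom a b) : idm b ∘ f = f. Proof. apply (comp_idl C HC). Qed.
Lemma comp_idm {a b : C} (f : hom a b) : f ∘ idm a = f. Proof. apply (comp_idr C HC). Qed.
Lemma tensm_comp {a b c a' b' c' : C}
  (f : hom a b) (f' : hom b c) (g : hom a' b') (g' : hom b' c') :
  (f' ∘ f) ⊗ (g' ∘ g) = (f' ⊗ g') ∘ (f ⊗ g). Proof. apply (tens_comp C HC). Qed.
Lemma tensm_idm (a b : C) : idm a ⊗ idm b = idm (tens a b). Proof. apply (tens_id C HC). Qed.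

Lemma postcomp2 {a b c : C} {g : hom b c} {f : hom a b} {r : hom a c} :
  g ∘ f = r -> forall W (h : hom c W), h ∘ g ∘ f = h ∘ r.
Proof. intros E W h. rewrite <- E. now rewrite compA. Qed.
Lemma postcomp3 {a b c d : C} {g1 : hom c d} {g2 : hom b c} {g3 : hom a b} {r : hom a d} :
  g1 ∘ g2 ∘ g3 = r -> forall W (h : hom d W), h ∘ g1 ∘ g2 ∘ g3 = h ∘ r.
Proof. intros E W h. rewrite <- E. now rewrite !compA. Qed.
Lemma postcomp4 {a b c d e : C}
  {g1 : hom d e} {g2 : hom c d} {g3 : hom b c} {g4 : hom a b} {r : hom a e} :
  g1 ∘ g2 ∘ g3 ∘ g4 = r -> forall W (h : hom e W), h ∘ g1 ∘ g2 ∘ g3 ∘ g4 = h ∘ r.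
Proof. intros E W h. rewrite <- E. now rewrite !compA. Qed.
Lemma postcomp5 {a b c d e f : C}
  {g1 : hom e f} {g2 : hom d e} {g3 : hom c d} {g4 : hom b c} {g5 : hom a b} {r : hom a f} :
  g1 ∘ g2 ∘ g3 ∘ g4 ∘ g5 = r -> forall W (h : hom f W), h ∘ g1 ∘ g2 ∘ g3 ∘ g4 ∘ g5 = h ∘ r.
Proof. intros E W h. rewrite <- E. now rewrite !compA. Qed.
Lemma postcomp6 {a b c d e f g : C} {g1 : hom f g} {g2 : hom e f} {g3 : hom d e}
  {g4 : hom c d} {g5 : hom b c} {g6 : hom a b} {r : hom a g} :
  g1 ∘ g2 ∘ g3 ∘ g4 ∘ g5 ∘ g6 = r ->
  forall W (h : hom g W), h ∘ g1 ∘ g2 ∘ g3 ∘ g4 ∘ g5 ∘ g6 = h ∘ r.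
Proof. intros E W h. rewrite <- E. now rewrite !compA. Qed.

(* [rw E] rewrites with an equation [E] between composites of up to six arrows wherever its
   left-hand side occurs inside a left-associated composite, then renormalizes. *)
Ltac reassoc := repeat rewrite compA.
Ltac drop_idm := repeat (rewrite idm_comp || rewrite comp_idm).
Tactic Notation "rw" uconstr(E) :=
  first [ rewrite (postcomp6 E) | rewrite (postcomp5 E) | rewrite (postcomp4 E)
        | rewrite (postcomp3 E) | rewrite (postcomp2 E) | rewrite E ];
  reassoc; drop_idm.
Tactic Notation "rwr" uconstr(E) := rw (eq_sym E).

Lemma comp_tensm1 {a b c d : C} (f : hom b c) (g : hom a b) :
  (f ⊗ idm d) ∘ (g ⊗ idm d) = (f ∘ g) ⊗ idm d.
Proof. now rewrite <- tensm_comp, idm_comp. Qed.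
Lemma comp_tens1m {a b c d : C} (f : hom b c) (g : hom a b) :
  (idm d ⊗ f) ∘ (idm d ⊗ g) = idm d ⊗ (f ∘ g).
Proof. now rewrite <- tensm_comp, idm_comp. Qed.
Lemma tensm_split {a b c d : C} (f : hom a b) (g : hom c d) : f ⊗ g = (f ⊗ idm d) ∘ (idm a ⊗ g).
Proof. now rewrite <- tensm_comp, idm_comp, comp_idm. Qed.

Ltac split_tensm := repeat (rewrite <- comp_tens1m || rewrite <- comp_tensm1); reassoc.

Lemma assoc_natural {a a' b b' c c' : C} (f : hom a a') (g : hom b b') (h : hom c c') :
  assoc a' b' c' ∘ ((f ⊗ g) ⊗ h) = (f ⊗ (g ⊗ h)) ∘ assoc a b c.
Proof. apply (assoc_nat C HC). Qed.
Lemma assocK (a b c : C) : assoc_inv a b c ∘ assoc a b c = idm _. Proof. apply (assoc_iso1 C HC). Qed.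
Lemma assoc_invK (a b c : C) : assoc a b c ∘ assoc_inv a b c = idm _. Proof. apply (assoc_iso2 C HC). Qed.
Lemma assoc_inv_natural {a a' b b' c c' : C} (f : hom a a') (g : hom b b') (h : hom c c') :
  assoc_inv a' b' c' ∘ (f ⊗ (g ⊗ h)) = ((f ⊗ g) ⊗ h) ∘ assoc_inv a b c.
Proof.
  rewrite <- (comp_idm (assoc_inv a' b' c' ∘ _)), <- (assoc_invK a b c). reassoc.
  rwr (assoc_natural f g h). rw (assocK a' b' c'). now drop_idm.
Qed.
Lemma assoc_pentagon (a b c d : C) :
  (idm a ⊗ assoc b c d) ∘ assoc a (tens b c) d ∘ (assoc a b c ⊗ idm d)
  = assoc a b (tens c d) ∘ assoc (tens a b) c d.
Proof. apply (pentagon C HC). Qed.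
Lemma unit_triangle (a b : C) : (idm a ⊗ lunit b) ∘ assoc a unitob b = runit a ⊗ idm b.
Proof. apply (triangle C HC). Qed.
Lemma lunit_natural {a b : C} (f : hom a b) : lunit b ∘ (idm unitob ⊗ f) = f ∘ lunit a.
Proof. apply (lunit_nat C HC). Qed.
Lemma runit_natural {a b : C} (f : hom a b) : runit b ∘ (f ⊗ idm unitob) = f ∘ runit a.
Proof. apply (runit_nat C HC). Qed.
Lemma lunitK (a : C) : lunit_inv a ∘ lunit a = idm _. Proof. apply (lunit_iso1 C HC). Qed.
Lemma lunit_invK (a : C) : lunit a ∘ lunit_inv a = idm _. Proof. apply (lunit_iso2 C HC). Qed.
Lemma runit_invK (a : C) : runit a ∘ runit_inv a = idm _. Proof. apply (runit_iso2 C HC). Qed.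
Lemma braid_natural {a a' b b' : C} (f : hom a a') (g : hom b b') :
  braid a' b' ∘ (f ⊗ g) = (g ⊗ f) ∘ braid a b.
Proof. apply (braid_nat C HC). Qed.
Lemma braidK (a b : C) : braid_inv a b ∘ braid a b = idm _. Proof. apply (braid_iso1 C HC). Qed.
Lemma braid_invK (a b : C) : braid a b ∘ braid_inv a b = idm _. Proof. apply (braid_iso2 C HC). Qed.

Lemma split_epi_cancel {a b c : C} (i : hom a b) (j : hom b a) (f g : hom b c) :
  i ∘ j = idm b -> f ∘ i = g ∘ i -> f = g.
Proof.
  intros Hij E. rewrite <- (comp_idm f), <- (comp_idm g), <- Hij. reassoc. now rewrite E.
Qed.
Lemma split_mono_cancel {a b c : C} (i : hom b c) (j : hom c b) (f g : hom a b) :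
  j ∘ i = idm b -> i ∘ f = i ∘ g -> f = g.
Proof.
  intros Hij E. rewrite <- (idm_comp f), <- (idm_comp g), <- Hij, <- !compA. now rewrite E.
Qed.
Lemma tens_unit_l_inj {a b : C} (f g : hom a b) : idm unitob ⊗ f = idm unitob ⊗ g -> f = g.
Proof.
  intro E. apply (split_epi_cancel (lunit a) (lunit_inv a)); [apply lunit_invK|].
  rewrite <- !lunit_natural. now rewrite E.
Qed.
Lemma tens_unit_r_inj {a b : C} (f g : hom a b) : f ⊗ idm unitob = g ⊗ idm unitob -> f = g.
Proof.
  intro E. apply (split_epi_cancel (runit a) (runit_inv a)); [apply runit_invK|].
  rewrite <- !runit_natural. now rewrite E.
Qed.

Lemma lunit_tens (x y : C) : lunit (tens x y) ∘ assoc unitob x y = lunit x ⊗ idm y.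
Proof.
  apply tens_unit_l_inj.
  apply (split_epi_cancel (assoc unitob (tens unitob x) y ∘ (assoc unitob unitob x ⊗ idm y))
           ((assoc_inv unitob unitob x ⊗ idm y) ∘ assoc_inv unitob (tens unitob x) y)).
  { reassoc. rw (comp_tensm1 (d:=y) (assoc unitob unitob x) (assoc_inv unitob unitob x)).
    rewrite assoc_invK, tensm_idm, comp_idm. apply assoc_invK. }
  rewrite <- (idm_comp (idm unitob)) at 1. rewrite tensm_comp. reassoc.
  rw (assoc_pentagon unitob unitob x y). rw (unit_triangle unitob (tens x y)).
  rewrite <- (tensm_idm x y). rwr (assoc_natural (runit unitob) (idm x) (idm y)).
  rewrite <- unit_triangle. rewrite <- comp_tensm1. reassoc.
  rw (assoc_natural (idm unitob) (lunit x) (idm y)).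
  reflexivity.
Qed.

Lemma runit_tens (x y : C) : (idm x ⊗ runit y) ∘ assoc x y unitob = runit (tens x y).
Proof.
  apply tens_unit_r_inj.
  apply (split_mono_cancel (assoc x y unitob) (assoc_inv x y unitob)); [apply assocK|].
  symmetry. rewrite <- unit_triangle, <- (tensm_idm x y). reassoc.
  rw (assoc_natural (idm x) (idm y) (lunit unitob)). rwr (assoc_pentagon x y unitob unitob).
  rewrite comp_tens1m, unit_triangle. rwr (assoc_natural (idm x) (runit y) (idm unitob)).
  rw (@comp_tensm1 _ _ _ _ _ _). reflexivity.
Qed.

Lemma lunit_runit_unit : lunit (@unitob C) = runit unitob.
Proof.
  apply tens_unit_r_inj. rewrite <- lunit_tens, <- unit_triangle. f_equal.
  apply (split_mono_cancel (lunit (@unitob C)) (lunit_inv unitob)); [apply lunitK|].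
  symmetry. apply lunit_natural.
Qed.

Lemma tensm1_inv {a b c : C} (f : hom a b) (g : hom b a) :
  f ∘ g = idm b -> (f ⊗ idm c) ∘ (g ⊗ idm c) = idm _.
Proof. intro E. now rewrite comp_tensm1, E, tensm_idm. Qed.
Lemma tens1m_inv {a b c : C} (f : hom a b) (g : hom b a) :
  f ∘ g = idm b -> (idm c ⊗ f) ∘ (idm c ⊗ g) = idm _.
Proof. intro E. now rewrite comp_tens1m, E, tensm_idm. Qed.

Lemma pentagon_1 (a b c d : C) :
  assoc a b (tens c d) ∘ assoc (tens a b) c d ∘ (assoc_inv a b c ⊗ idm d)
  = (idm a ⊗ assoc b c d) ∘ assoc a (tens b c) d.
Proof.
  rewrite <- (assoc_pentagon a b c d). reassoc. rw (tensm1_inv _ _ (assoc_invK a b c)).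
  now drop_idm.
Qed.
Lemma pentagon_2 (a b c d : C) :
  assoc a (tens b c) d ∘ (assoc a b c ⊗ idm d)
  = (idm a ⊗ assoc_inv b c d) ∘ assoc a b (tens c d) ∘ assoc (tens a b) c d.
Proof.
  rwr (assoc_pentagon a b c d). rw (tens1m_inv _ _ (assocK b c d)). now drop_idm.
Qed.
Lemma pentagon_3 (a b c d : C) :
  assoc (tens a b) c d ∘ (assoc_inv a b c ⊗ idm d)
  = assoc_inv a b (tens c d) ∘ (idm a ⊗ assoc b c d) ∘ assoc a (tens b c) d.
Proof.
  rwr (pentagon_1 a b c d). rw (assocK a b (tens c d)). now drop_idm.
Qed.
Lemma pentagon_4 (a b c d : C) :
  assoc (tens a b) c d ∘ (assoc_inv a b c ⊗ idm d) ∘ assoc_inv a (tens b c) d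
  = assoc_inv a b (tens c d) ∘ (idm a ⊗ assoc b c d).
Proof.
  rw (pentagon_3 a b c d). rw (assoc_invK a (tens b c) d). now drop_idm.
Qed.
Lemma pentagon_5 (a b c d : C) :
  assoc a (tens b c) d ∘ (assoc a b c ⊗ idm d) ∘ assoc_inv (tens a b) c d
  = (idm a ⊗ assoc_inv b c d) ∘ assoc a b (tens c d).
Proof.
  rw (pentagon_2 a b c d). rw (assoc_invK (tens a b) c d). now drop_idm.
Qed.
Lemma pentagon_6 (a b c d : C) :
  (assoc a b c ⊗ idm d) ∘ assoc_inv (tens a b) c d
  = assoc_inv a (tens b c) d ∘ (idm a ⊗ assoc_inv b c d) ∘ assoc a b (tens c d).
Proof.
  apply (split_mono_cancel (assoc a (tens b c) d) (assoc_inv a (tens b c) d)); [apply assocK|].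
  reassoc. rw (pentagon_5 a b c d). rw (assoc_invK a (tens b c) d). now drop_idm.
Qed.
Lemma pentagon_inv (a b c d : C) :
  assoc_inv (tens a b) c d ∘ assoc_inv a b (tens c d)
  = (assoc_inv a b c ⊗ idm d) ∘ assoc_inv a (tens b c) d ∘ (idm a ⊗ assoc_inv b c d).
Proof.
  apply (split_mono_cancel (assoc a b (tens c d) ∘ assoc (tens a b) c d)
     (assoc_inv (tens a b) c d ∘ assoc_inv a b (tens c d))).
  { reassoc. rw (assocK a b (tens c d)). drop_idm. apply assocK. }
  reassoc. rw (assoc_invK (tens a b) c d). rewrite assoc_invK.
  rwr (assoc_pentagon a b c d). rw (tensm1_inv _ _ (assoc_invK a b c)).
  rw (assoc_invK a (tens b c) d).
  now rewrite (tens1m_inv _ _ (assoc_invK b c d)).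
Qed.

Lemma unit_triangle_inv (a b : C) : (runit a ⊗ idm b) ∘ assoc_inv a unitob b = idm a ⊗ lunit b.
Proof. rewrite <- unit_triangle. rewrite <- compA, assoc_invK. now drop_idm. Qed.
Lemma runit_tens_inv (x y : C) : runit (tens x y) ∘ assoc_inv x y unitob = idm x ⊗ runit y.
Proof. rewrite <- runit_tens. rewrite <- compA, assoc_invK. now drop_idm. Qed.

(** * The middle-four interchange *)

Lemma braid_tens_r (x b c : C) :
  braid x (tens b c) = assoc_inv b c x ∘ (idm b ⊗ braid x c) ∘ assoc b x c
      ∘ (braid x b ⊗ idm c) ∘ assoc_inv x b c.
Proof.
  rwr (hexagon1 C HC x b c). rewrite assocK. drop_idm. rw (assoc_invK x b c). reflexivity.
Qed.
Lemma braid_tens_l (x y c : C) :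
  braid (tens x y) c = assoc c x y ∘ (braid x c ⊗ idm y) ∘ assoc_inv x c y
      ∘ (idm x ⊗ braid y c) ∘ assoc x y c.
Proof.
  rwr (hexagon2 C HC x y c). rewrite assoc_invK. drop_idm. rw (assocK x y c). reflexivity.
Qed.

Definition swap12 (x b w : C) : hom (tens x (tens b w)) (tens b (tens x w)) :=
  assoc b x w ∘ (braid x b ⊗ idm w) ∘ assoc_inv x b w.

Lemma middleFour_swap12 (a x b y : C) :
  middleFour a x b y = assoc_inv a b (tens x y) ∘ (idm a ⊗ swap12 x b y) ∘ assoc a x (tens b y).
Proof. unfold middleFour, swap12. split_tensm. reflexivity. Qed.

Lemma swap12_natural {x x' b b' w w' : C} (f : hom x x') (g : hom b b') (h : hom w w') :
  swap12 x' b' w' ∘ (f ⊗ (g ⊗ h)) = (g ⊗ (f ⊗ h)) ∘ swap12 x b w.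
Proof.
  unfold swap12. reassoc. rw (assoc_inv_natural f g h).
  rwr (tensm_comp (f ⊗ g) (braid x' b') h (idm w')).
  rewrite braid_natural. drop_idm.
  replace ((g ⊗ f ∘ braid x b) ⊗ h) with (((g ⊗ f) ⊗ h) ∘ (braid x b ⊗ idm w))
    by (now rewrite <- tensm_comp, comp_idm).
  reassoc. rw (assoc_natural g f h). reflexivity.
Qed.

Lemma swap12_tens_r (x b c w : C) :
  assoc b c (tens x w) ∘ swap12 x (tens b c) w
  = (idm b ⊗ swap12 x c w) ∘ swap12 x b (tens c w) ∘ (idm x ⊗ assoc b c w).
Proof.
  unfold swap12. reassoc. rewrite (braid_tens_r x b c). split_tensm.
  rw (pentagon_1 b c x w). rw (assoc_natural (idm b) (braid x c) (idm w)). rw (pentagon_2 b x c w).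
  rw (assoc_natural (braid x b) (idm c) (idm w)). rw (pentagon_4 x b c w). rewrite tensm_idm.
  reflexivity.
Qed.

Lemma swap12_tens_l (x y c z : C) :
  swap12 (tens x y) c z
  = (idm c ⊗ assoc_inv x y z) ∘ swap12 x c (tens y z) ∘ (idm x ⊗ swap12 y c z) ∘ assoc x y (tens c z).
Proof.
  unfold swap12. reassoc. rewrite (braid_tens_l x y c). split_tensm.
  rw (pentagon_2 c x y z). rw (assoc_natural (braid x c) (idm y) (idm z)). rewrite tensm_idm.
  rw (pentagon_3 x c y z). rw (assoc_natural (idm x) (braid y c) (idm z)). rw (pentagon_5 x y c z).
  reflexivity.
Qed.

Lemma swap12_assoc_tail (x b y w : C) :
  assoc b (tens x y) w ∘ (swap12 x b y ⊗ idm w) ∘ assoc_inv x (tens b y) w ∘ (idm x ⊗ assoc_inv b y w)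
  = (idm b ⊗ assoc_inv x y w) ∘ swap12 x b (tens y w).
Proof.
  unfold swap12. split_tensm. rwr (pentagon_inv x b y w).
  rwr (assoc_inv_natural (braid x b) (idm y) (idm w)). rw (pentagon_5 b x y w). rewrite tensm_idm.
  reflexivity.
Qed.

Lemma swap12_middleFour (x b y c z : C) :
  swap12 x (tens b c) (tens y z) ∘ (idm x ⊗ middleFour b y c z) ∘ assoc x (tens b y) (tens c z)
  = (idm (tens b c) ⊗ assoc x y z) ∘ assoc_inv b c (tens (tens x y) z)
    ∘ (idm b ⊗ swap12 (tens x y) c z) ∘ assoc b (tens x y) (tens c z)
    ∘ (swap12 x b y ⊗ idm (tens c z)).
Proof.
  apply (split_mono_cancel (assoc b c (tens x (tens y z))) (assoc_inv b c (tens x (tens y z))));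
    [apply assocK|].
  apply (split_epi_cancel (assoc_inv x (tens b y) (tens c z) ∘ (idm x ⊗ assoc_inv b y (tens c z)))
     ((idm x ⊗ assoc b y (tens c z)) ∘ assoc x (tens b y) (tens c z))).
  { reassoc. rw (tens1m_inv _ _ (assocK b y (tens c z))). apply assocK. }
  reassoc. rw (assoc_invK x (tens b y) (tens c z)). rewrite middleFour_swap12. split_tensm.
  rw (tens1m_inv _ _ (assoc_invK b y (tens c z))). rw (swap12_tens_r x b c (tens y z)).
  rw (tens1m_inv _ _ (assoc_invK b c (tens y z))).
  rw (swap12_natural (idm x) (idm b) (swap12 y c z)).
  rw (swap12_assoc_tail x b y (tens c z)). rewrite <- (tensm_idm b c).
  rw (assoc_natural (idm b) (idm c) (assoc x y z)). rw (assoc_invK b c (tens (tens x y) z)).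
  rewrite (swap12_tens_l x y c z). split_tensm.
  rw (tens1m_inv _ _ (tens1m_inv _ _ (assoc_invK x y z))).
  rw (tens1m_inv _ _ (assoc_invK x y (tens c z))).
  reflexivity.
Qed.

Lemma middleFour_assoc (a x b y c z : C) :
  middleFour a x (tens b c) (tens y z) ∘ (idm (tens a x) ⊗ middleFour b y c z)
    ∘ assoc (tens a x) (tens b y) (tens c z)
  = (assoc a b c ⊗ assoc x y z) ∘ middleFour (tens a b) (tens x y) c z
    ∘ (middleFour a x b y ⊗ idm (tens c z)).
Proof.
  rewrite (middleFour_swap12 a x (tens b c) (tens y z)),
    (middleFour_swap12 (tens a b) (tens x y) c z), (middleFour_swap12 a x b y).
  reassoc. rewrite <- (tensm_idm a x). rw (assoc_natural (idm a) (idm x) (middleFour b y c z)).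
  rwr (assoc_pentagon a x (tens b y) (tens c z)).
  rw (comp_tens1m (d:=a) (swap12 x (tens b c) (tens y z)) (idm x ⊗ middleFour b y c z)).
  rw (comp_tens1m (d:=a) (swap12 x (tens b c) (tens y z) ∘ (idm x ⊗ middleFour b y c z))
        (assoc x (tens b y) (tens c z))).
  rewrite swap12_middleFour. split_tensm.
  rwr (assoc_natural (idm a) (swap12 x b y) (idm (tens c z))).
  rwr (pentagon_1 a b (tens x y) (tens c z)).
  rwr (assoc_natural (idm a) (idm b) (swap12 (tens x y) c z)). rewrite (tensm_idm a b).
  rw (assoc_inv_natural (idm a) (idm (tens b c)) (assoc x y z)).
  rwr (pentagon_6 a b c (tens (tens x y) z)).
  rewrite (tensm_idm a (tens b c)). rwr (tensm_comp (assoc a b c) (idm _) (idm _) (assoc x y z)).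
  drop_idm. reflexivity.
Qed.

Lemma middleFour_natural {a a' b b' c c' d d' : C}
  (f : hom a b) (f' : hom a' b') (g : hom c d) (g' : hom c' d') :
  middleFour b b' d d' ∘ ((f ⊗ f') ⊗ (g ⊗ g')) = ((f ⊗ g) ⊗ (f' ⊗ g')) ∘ middleFour a a' c c'.
Proof.
  rewrite !middleFour_swap12. reassoc. rw (assoc_natural f f' (g ⊗ g')).
  rwr (tensm_comp f (idm b) (f' ⊗ (g ⊗ g')) (swap12 b' d d')). rewrite swap12_natural.
  replace (f ⊗ ((g ⊗ (f' ⊗ g')) ∘ swap12 a' c c'))
    with ((f ⊗ (g ⊗ (f' ⊗ g'))) ∘ (idm a ⊗ swap12 a' c c'))
    by (now rewrite <- tensm_comp, comp_idm).
  reassoc. rw (assoc_inv_natural f g (f' ⊗ g')). reflexivity.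
Qed.

Lemma comonoid_morphism_comp {a b c : C} (da : hom a (tens a a)) (ea : hom a unitob)
  (db : hom b (tens b b)) (eb : hom b unitob) (dc : hom c (tens c c)) (ec : hom c unitob)
  (f : hom a b) (g : hom b c) :
  IsComonoidMorphism da ea db eb f -> IsComonoidMorphism db eb dc ec g ->
  IsComonoidMorphism da ea dc ec (g ∘ f).
Proof.
  intros [F1 F2] [G1 G2]. split.
  - reassoc. rewrite G1, <- compA, F1. now rewrite compA, tensm_comp.
  - reassoc. now rewrite G2, F2.
Qed.

Lemma comonoid_morphism_idm {a : C} (da : hom a (tens a a)) (ea : hom a unitob) :
  IsComonoidMorphism da ea da ea (idm a).
Proof. split; [rewrite tensm_idm|]; now drop_idm. Qed.

Lemma comonoid_morphism_tensm {a b a' b' : C} (da : hom a (tens a a)) (ea : hom a unitob)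
  (db : hom b (tens b b)) (eb : hom b unitob)
  (da' : hom a' (tens a' a')) (ea' : hom a' unitob)
  (db' : hom b' (tens b' b')) (eb' : hom b' unitob)
  (f : hom a b) (g : hom a' b') :
  IsComonoidMorphism da ea db eb f -> IsComonoidMorphism da' ea' db' eb' g ->
  IsComonoidMorphism (tensDelta da da') (tensEps ea ea') (tensDelta db db') (tensEps eb eb') (f ⊗ g).
Proof.
  intros [F1 F2] [G1 G2]. unfold tensDelta, tensEps. split.
  - rewrite <- compA, <- tensm_comp, F1, G1, tensm_comp. reassoc. now rewrite middleFour_natural.
  - rewrite <- compA, <- tensm_comp. now rewrite F2, G2.
Qed.

Lemma comonoid_morphism_assoc {a b c : C} (da : hom a (tens a a)) (ea : hom a unitob)
  (db : hom b (tens b b)) (eb : hom b unitob) (dc : hom c (tens c c)) (ec : hom c unitob) :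
  IsComonoidMorphism (tensDelta (tensDelta da db) dc) (tensEps (tensEps ea eb) ec)
    (tensDelta da (tensDelta db dc)) (tensEps ea (tensEps eb ec)) (assoc a b c).
Proof.
  unfold tensDelta, tensEps. split.
  - replace (da ⊗ (middleFour b b c c ∘ db ⊗ dc))
      with ((idm (tens a a) ⊗ middleFour b b c c) ∘ (da ⊗ (db ⊗ dc)))
        by (now rewrite <- tensm_comp, idm_comp).
    reassoc. rwr (assoc_natural da db dc). rw (middleFour_assoc a a b b c c).
    replace ((middleFour a a b b ∘ da ⊗ db) ⊗ dc)
      with ((middleFour a a b b ⊗ idm (tens c c)) ∘ ((da ⊗ db) ⊗ dc))
        by (now rewrite <- tensm_comp, idm_comp).
    now reassoc.
  - replace (ea ⊗ (lunit unitob ∘ eb ⊗ ec))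
      with ((idm unitob ⊗ lunit unitob) ∘ (ea ⊗ (eb ⊗ ec)))
        by (now rewrite <- tensm_comp, idm_comp).
    reassoc. rwr (assoc_natural ea eb ec). rw (unit_triangle (@unitob C) unitob).
    rewrite <- lunit_runit_unit.
    replace ((lunit unitob ∘ ea ⊗ eb) ⊗ ec)
      with ((lunit unitob ⊗ idm unitob) ∘ ((ea ⊗ eb) ⊗ ec))
        by (now rewrite <- tensm_comp, idm_comp).
    now reassoc.
Qed.

(** * Epimorphisms stable under tensoring *)

Definition epi {a b : C} (f : hom a b) := forall z (g h : hom b z), g ∘ f = h ∘ f -> g = h.
Definition stable_epi {a b : C} (f : hom a b) := forall x : C, epi (idm x ⊗ f).

Lemma epi_comp {a b c : C} (f : hom b c) (g : hom a b) : epi f -> epi g -> epi (f ∘ g).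
Proof. intros Ef Eg z k h E. apply Ef, Eg. rewrite <- !compA. exact E. Qed.
Lemma split_epi {a b : C} (f : hom a b) (s : hom b a) : f ∘ s = idm b -> epi f.
Proof. intros E z g h H. apply (split_epi_cancel f s); auto. Qed.
Lemma stable_epi_epi {a b : C} (f : hom a b) : stable_epi f -> epi f.
Proof.
  intros L. assert (E : f = lunit b ∘ (idm unitob ⊗ f) ∘ lunit_inv a).
  { rewrite lunit_natural. rewrite <- compA, lunit_invK. now drop_idm. }
  rewrite E. apply epi_comp; [apply epi_comp|].
  - apply (split_epi _ (lunit_inv b)), lunit_invK.
  - apply L.
  - apply (split_epi _ (lunit a)), lunitK.
Qed.
Lemma stable_epi_comp {a b c : C} (f : hom b c) (g : hom a b) :
  stable_epi f -> stable_epi g -> stable_epi (f ∘ g).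
Proof. intros Lf Lg x. rewrite <- comp_tens1m. apply epi_comp; auto. Qed.
Lemma split_stable_epi {a b : C} (f : hom a b) (s : hom b a) : f ∘ s = idm b -> stable_epi f.
Proof. intros E x. apply (split_epi _ (idm x ⊗ s)). now rewrite comp_tens1m, E, tensm_idm. Qed.
Lemma stable_epi_tens1m {a b : C} (f : hom a b) (w : C) : stable_epi f -> stable_epi (idm w ⊗ f).
Proof.
  intros L x.
  assert (E : idm x ⊗ (idm w ⊗ f) = assoc x w b ∘ (idm (tens x w) ⊗ f) ∘ assoc_inv x w a).
  { rewrite <- tensm_idm. rewrite assoc_natural. rewrite <- compA, assoc_invK. now drop_idm. }
  rewrite E. apply epi_comp; [apply epi_comp|].
  - apply (split_epi _ (assoc_inv x w b)), assoc_invK.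
  - apply L.
  - apply (split_epi _ (assoc x w a)), assocK.
Qed.
Lemma stable_epi_tensm1 {a b : C} (f : hom a b) (w : C) : stable_epi f -> stable_epi (f ⊗ idm w).
Proof.
  intros L x.
  assert (E : f ⊗ idm w = braid w b ∘ (idm w ⊗ f) ∘ braid_inv w a).
  { rewrite braid_natural. rewrite <- compA, braid_invK. now drop_idm. }
  rewrite E, <- !comp_tens1m. apply epi_comp; [apply epi_comp|].
  - apply (split_epi _ (idm x ⊗ braid_inv w b)). now rewrite comp_tens1m, braid_invK, tensm_idm.
  - apply stable_epi_tens1m, L.
  - apply (split_epi _ (idm x ⊗ braid w a)). now rewrite comp_tens1m, braidK, tensm_idm.
Qed.

Lemma coequalizer_epi {X Y Q : C} (f g : hom X Y) (e : hom Y Q) : IsCoequalizer f g e -> epi e.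
Proof.
  intros [E U] z k h H. destruct (U z (k ∘ e)) as [m [_ Hu]].
  { rewrite <- !compA. now rewrite E. }
  rewrite (Hu k eq_refl), (Hu h (eq_sym H)). reflexivity.
Qed.

(** * The multiplication of the herd quotient *)

Section HerdQuotient.
Variables (A : C) (d : hom A (tens A A)) (e : hom A unitob) (q : hom (tens (tens A A) A) A).
Hypothesis Hherd : IsHerd A d e q.

Lemma herd_reflexive_pair : IsReflexivePair (herdSigma d q) (herdTau e).
Proof.
  destruct Hherd as [[Hca [Hcl Hcr]] [_ [_ [Hqd _]]]].
  assert (Hco : assoc_inv A A A ∘ (idm A ⊗ d) ∘ d = (d ⊗ idm A) ∘ d).
  { rwr Hca. rewrite assocK. now drop_idm. }
  exists (assoc_inv A A A ∘ (idm A ⊗ d)). unfold herdSigma, herdTau. split.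
  - reassoc. rewrite <- (tensm_idm A A). rwr (assoc_inv_natural (idm A) (idm A) d).
    rw (pentagon_inv A A A A).
    rw (comp_tens1m (d:=A) (assoc_inv A A A) (idm A ⊗ d)).
    rw (comp_tens1m (d:=A) (assoc_inv A A A ∘ (idm A ⊗ d)) d).
    rewrite Hco. split_tensm. rw (assoc_inv_natural (idm A) d (idm A)).
    rw (comp_tensm1 (d:=A) (assoc_inv A A A) (idm A ⊗ d)).
    rw (comp_tensm1 (d:=A) q (assoc_inv A A A ∘ idm A ⊗ d)).
    rewrite Hqd. split_tensm. rwr (assoc_inv_natural (idm A) e (idm A)).
    rw (unit_triangle_inv A A).
    rw (comp_tens1m (d:=A) (lunit A) (e ⊗ idm A)).
    rw (comp_tens1m (d:=A) (lunit A ∘ e ⊗ idm A) d).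
    rewrite Hcl. reflexivity.
  - reassoc. rewrite <- (tensm_idm A A). rwr (assoc_inv_natural (idm A) (idm A) e).
    rw (runit_tens_inv A A).
    rw (comp_tens1m (d:=A) (runit A) (idm A ⊗ e)).
    rw (comp_tens1m (d:=A) (runit A ∘ idm A ⊗ e) d).
    rewrite Hcr. reflexivity.
Qed.

(* In elements: (a, b) ⊗ (c, d) ↦ (q(a, b, c), d). *)
Definition herd_pair_mult : hom (tens (tens A A) (tens A A)) (tens A A) :=
  (q ⊗ idm A) ∘ assoc_inv (tens A A) A A.

Lemma herd_pair_mult_assoc :
  herd_pair_mult ∘ (herd_pair_mult ⊗ idm (tens A A))
  = herd_pair_mult ∘ (idm (tens A A) ⊗ herd_pair_mult) ∘ assoc (tens A A) (tens A A) (tens A A).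
Proof.
  destruct Hherd as [_ [_ [Hq _]]].
  apply (split_epi_cancel (assoc (tens A A) A A ⊗ idm (tens A A))
           (assoc_inv (tens A A) A A ⊗ idm (tens A A))); [apply tensm1_inv, assoc_invK|].
  unfold herd_pair_mult. split_tensm. rw (tensm1_inv _ _ (assocK (tens A A) A A)).
  replace ((q ⊗ idm A) ⊗ idm (tens A A)) with ((q ⊗ idm A) ⊗ (idm A ⊗ idm A))
    by (now rewrite tensm_idm).
  rw (assoc_inv_natural (q ⊗ idm A) (idm A) (idm A)).
  rw (comp_tensm1 (d:=A) q ((q ⊗ idm A) ⊗ idm A)). rewrite Hq. split_tensm.
  rw (assoc_inv_natural (idm (tens A A)) q (idm A)).
  rw (comp_tensm1 (d:=A) (idm (tens A A) ⊗ assoc_inv A A A) (assoc (tens A A) A (tens A A))).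
  rw (comp_tensm1 (d:=A) (idm (tens A A) ⊗ assoc_inv A A A ∘ assoc (tens A A) A (tens A A))
        (assoc (tens (tens A A) A) A A)).
  rwr (pentagon_2 (tens A A) A A A). split_tensm.
  rwr (pentagon_6 (tens A A) (tens A A) A A).
  replace (assoc (tens A A) A A ⊗ idm (tens A A)) with (assoc (tens A A) A A ⊗ (idm A ⊗ idm A))
    by (now rewrite tensm_idm).
  rw (assoc_inv_natural (assoc (tens A A) A A) (idm A) (idm A)). reflexivity.
Qed.

Variables (H : C) (varpi : hom (tens A A) H).
Hypothesis Hvarpi : IsCoequalizer (herdSigma d q) (herdTau e) varpi.
Hypothesis Hpres : TensorLeftPreservesReflexiveCoequalizers (C := C).
Variable mu : hom (tens H H) H.
Hypothesis Hmu : mu ∘ (varpi ⊗ varpi) ∘ assoc (tens A A) A A = varpi ∘ (q ⊗ idm A).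

Lemma varpi_stable_epi : stable_epi varpi.
Proof.
  intro x. exact (coequalizer_epi _ _ _ (Hpres _ _ _ _ _ _ herd_reflexive_pair Hvarpi x)).
Qed.

Lemma varpi_tensm_stable_epi : stable_epi (varpi ⊗ varpi).
Proof.
  rewrite tensm_split.
  apply stable_epi_comp; [apply stable_epi_tensm1 | apply stable_epi_tens1m]; exact varpi_stable_epi.
Qed.

Lemma mu_varpi : mu ∘ (varpi ⊗ varpi) = varpi ∘ herd_pair_mult.
Proof.
  unfold herd_pair_mult. rewrite compA, <- Hmu, <- compA, assoc_invK. now drop_idm.
Qed.

Lemma mu_assoc : mu ∘ (mu ⊗ idm H) = mu ∘ (idm H ⊗ mu) ∘ assoc H H H.
Proof.
  assert (Hepi : epi ((varpi ⊗ varpi) ⊗ varpi)).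
  { apply stable_epi_epi. rewrite tensm_split.
    apply stable_epi_comp;
      [apply stable_epi_tensm1, varpi_tensm_stable_epi | apply stable_epi_tens1m, varpi_stable_epi]. }
  apply Hepi.
  rewrite <- compA, <- tensm_comp, idm_comp, mu_varpi.
  replace ((varpi ∘ herd_pair_mult) ⊗ varpi)
    with ((varpi ⊗ varpi) ∘ (herd_pair_mult ⊗ idm (tens A A)))
      by (now rewrite <- tensm_comp, comp_idm).
  reassoc. rw mu_varpi. rw (assoc_natural varpi varpi varpi).
  rwr (tensm_comp varpi (idm H) (varpi ⊗ varpi) mu). rewrite mu_varpi.
  replace (varpi ⊗ (varpi ∘ herd_pair_mult))
    with ((varpi ⊗ varpi) ∘ (idm (tens A A) ⊗ herd_pair_mult))
      by (now rewrite <- tensm_comp, comp_idm).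
  reassoc. rw mu_varpi. rw herd_pair_mult_assoc. reflexivity.
Qed.

Variables (dH : hom H (tens H H)) (eH : hom H unitob).
Hypothesis Hvarpi_com :
  IsComonoidMorphism (tensDelta d (opDelta d)) (tensEps e e) dH eH varpi.

Lemma mu_comonoid_morphism : IsComonoidMorphism (tensDelta dH dH) (tensEps eH eH) dH eH mu.
Proof.
  destruct Hherd as [_ [Hqcm _]].
  set (phi := (varpi ⊗ varpi) ∘ assoc (tens A A) A A).
  assert (Hphi_epi : epi phi).
  { apply stable_epi_epi, stable_epi_comp; [exact varpi_tensm_stable_epi|].
    apply (split_stable_epi _ (assoc_inv (tens A A) A A)), assoc_invK. }
  assert (Hmu_phi : mu ∘ phi = varpi ∘ (q ⊗ idm A)) by (unfold phi; rewrite compA; exact Hmu).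
  assert (Hphi_com : IsComonoidMorphism (tensDelta (tensDelta (tensDelta d (opDelta d)) d) (opDelta d))
    (tensEps (tensEps (tensEps e e) e) e) (tensDelta dH dH) (tensEps eH eH) phi).
  { eapply comonoid_morphism_comp;
      [apply comonoid_morphism_assoc | apply comonoid_morphism_tensm; exact Hvarpi_com]. }
  assert (Hq_com := comonoid_morphism_comp _ _ _ _ _ _ _ _
    (comonoid_morphism_tensm _ _ _ _ _ _ _ _ _ _ Hqcm (comonoid_morphism_idm (opDelta d) e))
    Hvarpi_com).
  destruct Hphi_com as [Hphi_d Hphi_e], Hq_com as [Hq_d Hq_e]. split; apply Hphi_epi.
  - rewrite <- compA, Hmu_phi, Hq_d, <- compA, Hphi_d, compA, <- tensm_comp, Hmu_phi.
    reflexivity.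
  - rewrite <- compA, Hmu_phi, Hq_e, Hphi_e. reflexivity.
Qed.

End HerdQuotient.

End BraidedMonoidal.

Theorem mainTheorem1 (C : BMCData) (HC : IsBMC C)
  (Hcoeq : HasReflexiveCoequalizers (C := C))
  (Hpres : TensorLeftPreservesReflexiveCoequalizers (C := C))
  (A : C) (d : hom A (tens A A)) (e : hom A unitob)
  (q : hom (tens (tens A A) A) A)
  (Hherd : IsHerd A d e q)
  (H : C) (varpi : hom (tens A A) H)
  (Hvarpi : IsCoequalizer (herdSigma d q) (herdTau e) varpi)
  (dH : hom H (tens H H)) (eH : hom H unitob)
  (HHcom : IsComonoid H dH eH)
  (Hvarpi_com : IsComonoidMorphism (tensDelta d (opDelta d)) (tensEps e e) dH eH varpi)
  (mu : hom (tens H H) H)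
  (Hmu : mu ∘ (varpi ⊗ varpi) ∘ assoc (tens A A) A A = varpi ∘ (q ⊗ idm A)) :
  mu ∘ (mu ⊗ idm H) = mu ∘ (idm H ⊗ mu) ∘ assoc H H H /\
  IsComonoidMorphism (tensDelta dH dH) (tensEps eH eH) dH eH mu.
Proof.
  split.
  - exact (mu_assoc HC A d e q Hherd H varpi Hvarpi Hpres mu Hmu).
  - exact (mu_comonoid_morphism HC A d e q Hherd H varpi Hvarpi Hpres mu Hmu dH eH Hvarpi_com).
Qed.
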